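(* Let $m\ge2$, $q\ge2$ be integers, $A$ a primitive $m\times m$ matrix with entries in $\{0,1\}$, and $\Sigma_A=\{(x_k)_{k\ge1}\in\{0,\dots,m-1\}^{\mathbb N}:\ A(x_k,x_{k+1})=1 \ \forall k\}$. Let $(t_i)_{i=0}^{m-1}$ be the unique vector with $t_i>1$ and $t_i^q=\sum_j A(i,j)t_j$ for all $i$. Then the unique Borel probability measure $\mu$ on $\Sigma_A$ maximizing $s(\Sigma_A,\mu)$ is the Markov measure with initial probability vector $\mathbf{p}=\bigl(\sum_{i=0}^{m-1}t_i\bigr)^{-1}(t_0,\dots,t_{m-1})$ and transition probabilities $p_{ij}=t_j/t_i^q$ if $A(i,j)=1$ (and $p_{ij}=0$ otherwise).
   Context: A non-negative matrix is primitive if some power is strictly positive. For a closed $\Omega\subset\Sigma_m$ and Borel probability $\mu$ on $\Omega$: $[u]$ is the cylinder of sequences beginning with word $u$, $\alpha_k=\{\Omega\cap[u]:\ u\in\{0,\dots,m-1\}^k,\ \Omega\cap[u]\ne\emptyset\}$, $H_m^\mu(\alpha)=-\sum_{C\in\alpha}\mu(C)\log_m\mu(C)$, and $s(\Omega,\mu)=(q-1)^2\sum_{k\ge1}H_m^\mu(\alpha_k)/q^{k+1}$. *)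

From Stdlib Require Import Reals Lra List Arith ClassicalEpsilon.
Import ListNotations.
Open Scope R_scope.

Definition sumR (n : nat) (f : nat -> R) : R :=
  fold_right Rplus 0 (map f (seq 0 n)).

(** 0/1 matrix A given as a boolean function on indices (only i,j < m matter). *)
Definition entry (A : nat -> nat -> bool) (i j : nat) : R := if A i j then 1 else 0.

Fixpoint mxpow (m : nat) (A : nat -> nat -> bool) (n : nat) (i j : nat) : R :=
  match n with
  | O => if Nat.eqb i j then 1 else 0
  | S n' => sumR m (fun k => mxpow m A n' i k * entry A k j)
  end.

Definition primitive01 (m : nat) (A : nat -> nat -> bool) : Prop :=
  exists n : nat, forall i j, (i < m)%nat -> (j < m)%nat -> 0 < mxpow m A n i j.

(** Sigma_A : one-sided sequences (indexed from 0) over {0..m-1} with A(x_k,x_{k+1}) = 1 *)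
Definition in_SigmaA (m : nat) (A : nat -> nat -> bool) (x : nat -> nat) : Prop :=
  forall k, (x k < m)%nat /\ A (x k) (x (S k)) = true.

Definition has_prefix (x : nat -> nat) (u : list nat) : Prop :=
  forall k, (k < length u)%nat -> x k = nth k u O.

Definition cyl_nonempty (m : nat) (A : nat -> nat -> bool) (u : list nat) : Prop :=
  exists x, in_SigmaA m A x /\ has_prefix x u.

(** A Borel probability measure on Sigma_A, represented (Caratheodory/Kolmogorov)
    by its values on cylinders: nu u = mu(Sigma_A ∩ [u]). *)
Definition cyl_measure (m : nat) (A : nat -> nat -> bool) (nu : list nat -> R) : Prop :=
  nu [] = 1 /\
  (forall u, 0 <= nu u) /\
  (forall u, nu u = sumR m (fun a => nu (u ++ [a]))) /\
  (forall u, ~ cyl_nonempty m A u -> nu u = 0).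

Fixpoint words (m k : nat) : list (list nat) :=
  match k with
  | O => [[]]
  | S k' => flat_map (fun u => map (fun a => u ++ [a]) (seq 0 m)) (words m k')
  end.

Definition ent (m : nat) (x : R) : R := - x * (ln x / ln (INR m)).

(** H_m^nu(alpha_k): sum over the (nonempty) cells Sigma_A ∩ [u], |u| = k *)
Definition Hk (m : nat) (A : nat -> nat -> bool) (nu : list nat -> R) (k : nat) : R :=
  fold_right Rplus 0
    (map (fun u => if excluded_middle_informative (cyl_nonempty m A u)
                   then ent m (nu u) else 0) (words m k)).

(** s(Sigma_A, nu) = l, i.e. (q-1)^2 sum_{k>=1} H(alpha_k)/q^(k+1) converges to l *)
Definition s_is (m q : nat) (A : nat -> nat -> bool) (nu : list nat -> R) (l : R) : Prop :=
  infinite_sum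
    (fun n => (INR q - 1) ^ 2 * Hk m A nu (S n) / INR q ^ (S (S n))) l.

Definition init_p (m : nat) (t : nat -> R) (i : nat) : R :=
  if Nat.ltb i m then t i / sumR m t else 0.

Definition trans_p (m q : nat) (A : nat -> nat -> bool) (t : nat -> R) (i j : nat) : R :=
  if (Nat.ltb i m && Nat.ltb j m && A i j)%bool then t j / t i ^ q else 0.

Fixpoint markov_from (m q : nat) (A : nat -> nat -> bool) (t : nat -> R)
    (i : nat) (u : list nat) : R :=
  match u with
  | [] => 1
  | j :: u' => trans_p m q A t i j * markov_from m q A t j u'
  end.

Definition markov (m q : nat) (A : nat -> nat -> bool) (t : nat -> R) (u : list nat) : R :=
  match u with
  | [] => 1
  | i :: u' => init_p m t i * markov_from m q A t i u'
  end.

(* Let [mu] be the Markov measure and [S = sum_i t_i].  Along an admissible word the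
   transition factors [t_j / t_i ^ q] telescope, so that
   [ln mu(u a) = - ln S + (1 - q) sum_(b in u) ln t_b + ln t_a].  Hence for every
   cylinder measure [nu] the cross entropy of level [k+1] relative to [mu] equals
   [ln S + q Z_k - Z_(k+1)], where [Z_k] is the [nu]-average of [sum_(b in u) ln t_b]
   over words of length [k].  With the weights [q ^ -(k+2)] of [s] these terms
   telescope, so the weighted cross-entropy series has the same sum
   [(q - 1) ln S / (q ln m)] for every [nu].  By Gibbs' inequality each entropy
   [H(alpha_k)] is at most the corresponding cross entropy, with equality only if
   [nu = mu] on words of length [k]; hence [s(nu) <= s(mu)], with equality only for
   [nu = mu]. *)

From Stdlib Require Import Reals Lra Lia List ClassicalEpsilon.
From Coquelicot Require Import Rbar Hierarchy Lim_seq Series.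
Import ListNotations.
Open Scope R_scope.

Definition lsum {T} (f : T -> R) (l : list T) : R := fold_right Rplus 0 (map f l).

Lemma lsum_cons {T} (f : T -> R) x l : lsum f (x :: l) = f x + lsum f l.
Proof. reflexivity. Qed.

Lemma lsum_app {T} (f : T -> R) l1 l2 : lsum f (l1 ++ l2) = lsum f l1 + lsum f l2.
Proof.
  induction l1 as [|x l1 IH]; [cbn [app]; unfold lsum at 2; cbn; ring|].
  cbn [app]. rewrite !lsum_cons, IH; ring.
Qed.

Lemma lsum_flat_map {T U} (f : U -> R) (g : T -> list U) l :
  lsum f (flat_map g l) = lsum (fun x => lsum f (g x)) l.
Proof.
  induction l as [|x l IH]; [reflexivity|]. cbn [flat_map]. rewrite lsum_app, IH. reflexivity.
Qed.

Lemma lsum_ext_in {T} (f g : T -> R) l : (forall x, In x l -> f x = g x) -> lsum f l = lsum g l.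
Proof. intros H; unfold lsum; f_equal; apply map_ext_in; exact H. Qed.

Lemma lsum_plus {T} (f g : T -> R) l : lsum (fun x => f x + g x) l = lsum f l + lsum g l.
Proof. induction l as [|x l IH]; [unfold lsum; cbn; ring|]. rewrite !lsum_cons, IH; ring. Qed.

Lemma lsum_scal {T} (c : R) (f : T -> R) l : lsum (fun x => c * f x) l = c * lsum f l.
Proof. induction l as [|x l IH]; [unfold lsum; cbn; ring|]. rewrite !lsum_cons, IH; ring. Qed.

Lemma lsum_opp {T} (f : T -> R) l : lsum (fun x => - f x) l = - lsum f l.
Proof. induction l as [|x l IH]; [unfold lsum; cbn; ring|]. rewrite !lsum_cons, IH; ring. Qed.

Lemma lsum_minus {T} (f g : T -> R) l : lsum (fun x => f x - g x) l = lsum f l - lsum g l.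
Proof. induction l as [|x l IH]; [unfold lsum; cbn; ring|]. rewrite !lsum_cons, IH; ring. Qed.

Lemma lsum_le {T} (f g : T -> R) l : (forall x, In x l -> f x <= g x) -> lsum f l <= lsum g l.
Proof.
  induction l as [|x l IH]; intros H; cbn; [lra|].
  apply Rplus_le_compat; [apply H; left; reflexivity|].
  apply IH. intros y Hy. apply H; right; exact Hy.
Qed.

Lemma Rabs_lsum_le {T} (f : T -> R) l : Rabs (lsum f l) <= lsum (fun x => Rabs (f x)) l.
Proof.
  induction l as [|x l IH]; [unfold lsum; cbn; rewrite Rabs_R0; lra|].
  rewrite !lsum_cons. pose proof (Rabs_triang (f x) (lsum f l)). lra.
Qed.

Lemma lsum_nonneg {T} (f : T -> R) l : (forall x, In x l -> 0 <= f x) -> 0 <= lsum f l.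
Proof.
  intros H. replace 0 with (lsum (fun x => 0 * f x) l) by (rewrite lsum_scal; ring).
  apply lsum_le. intros x Hx. rewrite Rmult_0_l. exact (H x Hx).
Qed.

Lemma lsum_term_le {T} (f : T -> R) l x :
  (forall y, In y l -> 0 <= f y) -> In x l -> f x <= lsum f l.
Proof.
  induction l as [|y l IH]; intros H Hx; [destruct Hx|]. rewrite lsum_cons.
  assert (0 <= f y) by (apply H; left; reflexivity).
  assert (Hl : forall z, In z l -> 0 <= f z) by (intros z Hz; apply H; right; exact Hz).
  destruct Hx as [<-|Hx].
  - assert (0 <= lsum f l) by (apply lsum_nonneg; exact Hl). lra.
  - assert (f x <= lsum f l) by (apply IH; assumption). lra.
Qed.

Lemma lsum_eq0_nonneg {T} (f : T -> R) l x :
  (forall y, In y l -> 0 <= f y) -> lsum f l = 0 -> In x l -> f x = 0.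
Proof.
  intros H H0 Hx. assert (f x <= lsum f l) by (apply lsum_term_le; assumption).
  assert (0 <= f x) by (apply H; exact Hx). lra.
Qed.

Lemma lsum_words_S m k (f : list nat -> R) :
  lsum f (words m (S k)) = lsum (fun u => sumR m (fun a => f (u ++ [a]))) (words m k).
Proof.
  cbn [words]. rewrite lsum_flat_map. apply lsum_ext_in. intros u _.
  unfold lsum, sumR. rewrite map_map. reflexivity.
Qed.

Lemma in_words m k u : In u (words m k) -> length u = k /\ Forall (fun a => (a < m)%nat) u.
Proof.
  revert u; induction k as [|k IH]; intros u H; cbn [words] in H.
  - destruct H as [<-|[]]. split; [reflexivity|constructor].
  - apply in_flat_map in H as [v [Hv Hu]]. apply in_map_iff in Hu as [a [<- Ha]].
    apply in_seq in Ha. destruct (IH v Hv) as [Hl Hf]. split.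
    + rewrite length_app, Hl; cbn; lia.
    + apply Forall_app; split; [exact Hf|]. constructor; [lia|constructor].
Qed.

Lemma words_complete m u : Forall (fun a => (a < m)%nat) u -> In u (words m (length u)).
Proof.
  induction u as [|a u IH] using rev_ind; intros H; [left; reflexivity|].
  apply Forall_app in H as [Hu Ha]. inversion Ha; subst.
  rewrite length_app, Nat.add_comm. cbn [words]. apply in_flat_map. exists u.
  split; [apply IH; exact Hu|].
  apply in_map_iff. exists a. split; [reflexivity|]. apply in_seq; lia.
Qed.

Lemma cyl_nonempty_letters m A u : cyl_nonempty m A u -> Forall (fun a => (a < m)%nat) u.
Proof.
  intros [x [Hx Hp]]. apply Forall_forall. intros a Ha.
  destruct (In_nth u a O Ha) as [k [Hk <-]]. rewrite <- (Hp k Hk). apply Hx.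
Qed.

Section CylinderMeasure.
Variables (m : nat) (A : nat -> nat -> bool) (nu : list nat -> R).
Hypothesis nu_cyl : cyl_measure m A nu.

Lemma cyl_measure_nonneg u : 0 <= nu u.
Proof. apply nu_cyl. Qed.

Lemma cyl_measure_level k : lsum nu (words m k) = 1.
Proof.
  destruct nu_cyl as (nu_nil & _ & nu_split & _). induction k as [|k IH].
  - cbn. rewrite nu_nil. ring.
  - rewrite lsum_words_S, <- IH. apply lsum_ext_in. intros u _. symmetry. apply nu_split.
Qed.

Lemma cyl_measure_le1 k u : In u (words m k) -> nu u <= 1.
Proof.
  intros Hu. rewrite <- (cyl_measure_level k).
  apply lsum_term_le; [intros; apply cyl_measure_nonneg|exact Hu].
Qed.

Lemma cyl_measure_pos_cyl u : 0 < nu u -> cyl_nonempty m A u.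
Proof.
  intros H. apply NNPP. intros Hn. destruct nu_cyl as (_ & _ & _ & nu_empty).
  rewrite (nu_empty u Hn) in H. lra.
Qed.

End CylinderMeasure.

Lemma cyl_measure_ext m A nu mu : cyl_measure m A nu -> cyl_measure m A mu ->
  (forall k u, In u (words m (S k)) -> nu u = mu u) -> forall u, nu u = mu u.
Proof.
  intros (nu_nil & _ & _ & nu_empty) (mu_nil & _ & _ & mu_empty) Hwords u.
  destruct (classic (cyl_nonempty m A u)) as [Hu|Hu].
  - destruct u as [|a w]; [rewrite nu_nil, mu_nil; reflexivity|].
    apply (Hwords (length w)). apply (words_complete m (a :: w)), (cyl_nonempty_letters m A), Hu.
  - rewrite nu_empty, mu_empty; trivial.
Qed.

Lemma ln_div x y : 0 < x -> 0 < y -> ln (x / y) = ln x - ln y.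
Proof.
  intros Hx Hy. unfold Rdiv.
  rewrite ln_mult, ln_Rinv; [ring|exact Hy|exact Hx|apply Rinv_0_lt_compat, Hy].
Qed.

Lemma ln_le_sub1 x : 0 < x -> ln x <= x - 1.
Proof. intros Hx. pose proof (exp_ineq1_le (ln x)) as H. rewrite exp_ln in H; lra. Qed.

Lemma ln_eq_sub1 x : 0 < x -> ln x = x - 1 -> x = 1.
Proof.
  intros Hx He. destruct (Req_dec (ln x) 0) as [H0|H0].
  - rewrite <- (exp_ln x), H0, exp_0; trivial.
  - pose proof (exp_ineq1 (ln x) H0) as H. rewrite exp_ln in H; lra.
Qed.

Lemma xlny_sub_xlnx_le a b : 0 <= a -> 0 <= b -> (0 < a -> 0 < b) ->
  a * ln b - a * ln a <= b - a.
Proof.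
  intros Ha Hb Hab. destruct (Req_dec a 0) as [->|Ha0]; [lra|].
  assert (Ha' : 0 < a) by lra. assert (Hb' := Hab Ha').
  pose proof (ln_le_sub1 (b / a) (Rdiv_lt_0_compat _ _ Hb' Ha')) as H.
  rewrite ln_div in H by assumption.
  replace (b - a) with (a * (b / a - 1)) by (field; lra).
  replace (a * ln b - a * ln a) with (a * (ln b - ln a)) by ring.
  apply Rmult_le_compat_l; lra.
Qed.

Lemma xlny_sub_xlnx_eq a b : 0 <= a -> 0 <= b -> (0 < a -> 0 < b) ->
  a * ln b - a * ln a = b - a -> a = b.
Proof.
  intros Ha Hb Hab He. destruct (Req_dec a 0) as [->|Ha0]; [lra|].
  assert (Ha' : 0 < a) by lra. assert (Hb' := Hab Ha').
  assert (Hr : ln (b / a) = b / a - 1).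
  { rewrite ln_div by assumption. apply (Rmult_eq_reg_l a); [|lra].
    replace (a * (b / a - 1)) with (b - a) by (field; lra). lra. }
  apply ln_eq_sub1 in Hr; [|apply Rdiv_lt_0_compat; assumption].
  replace b with (a * (b / a)) by (field; lra). rewrite Hr. ring.
Qed.

Section Gibbs.
Variables (T : Type) (f g : T -> R) (l : list T).
Hypothesis fg_admissible : forall x, In x l -> 0 <= f x /\ 0 <= g x /\ (0 < f x -> 0 < g x).

Lemma gibbs_lsum : lsum (fun x => f x * ln (g x) - f x * ln (f x)) l <= lsum g l - lsum f l.
Proof.
  rewrite <- lsum_minus. apply lsum_le. intros x Hx.
  destruct (fg_admissible x Hx) as (Hf & Hg & Hfg). apply xlny_sub_xlnx_le; assumption.
Qed.

Lemma gibbs_lsum_eq : lsum (fun x => f x * ln (g x) - f x * ln (f x)) l = lsum g l - lsum f l ->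
  forall x, In x l -> f x = g x.
Proof.
  intros He x Hx.
  set (gap := fun y => (g y - f y) - (f y * ln (g y) - f y * ln (f y))).
  assert (Hgap : forall y, In y l -> 0 <= gap y).
  { intros y Hy. destruct (fg_admissible y Hy) as (Hf & Hg & Hfg).
    pose proof (xlny_sub_xlnx_le _ _ Hf Hg Hfg). unfold gap; lra. }
  assert (Hsum : lsum gap l = 0) by (unfold gap; rewrite !lsum_minus in *; lra).
  pose proof (lsum_eq0_nonneg gap l x Hgap Hsum Hx) as Hx0.
  destruct (fg_admissible x Hx) as (Hf & Hg & Hfg).
  apply xlny_sub_xlnx_eq; [assumption..|]. unfold gap in Hx0; lra.
Qed.

End Gibbs.

Definition cross_entropy (m : nat) (nu mu : list nat -> R) (k : nat) : R :=
  - lsum (fun u => nu u * ln (mu u)) (words m k).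

Lemma Hk_cross_entropy m A nu k : cyl_measure m A nu ->
  Hk m A nu k = cross_entropy m nu nu k / ln (INR m).
Proof.
  intros nu_cyl. unfold Hk, cross_entropy.
  change (fold_right Rplus 0 (map ?F (words m k))) with (lsum F (words m k)).
  transitivity (lsum (fun u => (- / ln (INR m)) * (nu u * ln (nu u))) (words m k));
    [|rewrite lsum_scal; unfold Rdiv; ring].
  apply lsum_ext_in. intros u _. unfold ent.
  destruct (excluded_middle_informative (cyl_nonempty m A u)) as [Hu|Hu].
  - unfold Rdiv. ring.
  - destruct nu_cyl as (_ & _ & _ & nu_empty). rewrite (nu_empty u Hu). ring.
Qed.

Lemma cross_entropy_self_nonneg m A nu k : cyl_measure m A nu -> 0 <= cross_entropy m nu nu k.
Proof.
  intros nu_cyl. unfold cross_entropy. rewrite <- Ropp_0. apply Ropp_le_contravar.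
  replace 0 with (lsum (fun u => 0 * nu u) (words m k)) by (rewrite lsum_scal; ring).
  apply lsum_le. intros u Hu. rewrite Rmult_0_l.
  destruct (cyl_measure_nonneg m A nu nu_cyl u) as [Hpos|<-]; [|lra].
  pose proof (ln_le_sub1 _ Hpos). pose proof (cyl_measure_le1 m A nu nu_cyl k u Hu).
  assert (ln (nu u) <= 0) by lra. nra.
Qed.

Section GibbsCylinder.
Variables (m : nat) (A : nat -> nat -> bool) (nu mu : list nat -> R).
Hypotheses (nu_cyl : cyl_measure m A nu) (mu_cyl : cyl_measure m A mu).
Hypothesis nu_ac_mu : forall u, 0 < nu u -> 0 < mu u.

Let nu_mu_admissible k :
  forall u, In u (words m k) -> 0 <= nu u /\ 0 <= mu u /\ (0 < nu u -> 0 < mu u).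
Proof.
  intros u _. split; [|split]; [apply (cyl_measure_nonneg m A)..|apply nu_ac_mu]; assumption.
Qed.

Lemma gibbs_cross_entropy k : cross_entropy m nu nu k <= cross_entropy m nu mu k.
Proof.
  pose proof (gibbs_lsum _ nu mu (words m k) (nu_mu_admissible k)) as H.
  rewrite lsum_minus, (cyl_measure_level m A nu), (cyl_measure_level m A mu) in H by assumption.
  unfold cross_entropy. lra.
Qed.

Lemma gibbs_cross_entropy_eq k : cross_entropy m nu nu k = cross_entropy m nu mu k ->
  forall u, In u (words m k) -> nu u = mu u.
Proof.
  intros He. apply (gibbs_lsum_eq _ nu mu (words m k) (nu_mu_admissible k)).
  rewrite lsum_minus, (cyl_measure_level m A nu), (cyl_measure_level m A mu) by assumption.
  unfold cross_entropy in He. lra.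
Qed.

End GibbsCylinder.

Lemma trans_p_pos_inv m q A t i j : 0 < trans_p m q A t i j ->
  (i < m)%nat /\ (j < m)%nat /\ A i j = true /\ trans_p m q A t i j = t j / t i ^ q.
Proof.
  unfold trans_p. destruct (Nat.ltb_spec i m), (Nat.ltb_spec j m), (A i j); cbn; intros Hpos;
    solve [lra | repeat split; trivial].
Qed.

Lemma markov_from_step m q A t i w b a :
  markov_from m q A t i (w ++ [b; a]) = markov_from m q A t i (w ++ [b]) * trans_p m q A t b a.
Proof. revert i; induction w as [|j w IH]; intros i; cbn -[trans_p]; [ring|]. rewrite IH; ring. Qed.

Lemma markov_step m q A t u b a :
  markov m q A t (u ++ [b; a]) = markov m q A t (u ++ [b]) * trans_p m q A t b a.
Proof.
  destruct u as [|i w]; cbn -[trans_p init_p]; [ring|].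
  rewrite markov_from_step. ring.
Qed.

Definition ln_weight (t : nat -> R) (u : list nat) : R := lsum (fun a => ln (t a)) u.

Lemma ln_weight_snoc t u a : ln_weight t (u ++ [a]) = ln_weight t u + ln (t a).
Proof. unfold ln_weight. rewrite lsum_app. unfold lsum; cbn; ring. Qed.

Definition mean_ln_weight (m : nat) (t : nat -> R) (nu : list nat -> R) (k : nat) : R :=
  lsum (fun u => nu u * ln_weight t u) (words m k).

Lemma mean_ln_weight_0 m t nu : mean_ln_weight m t nu 0 = 0.
Proof. unfold mean_ln_weight, ln_weight, lsum; cbn. ring. Qed.

Lemma abs_ln_weight_le m t u : Forall (fun a => (a < m)%nat) u ->
  Rabs (ln_weight t u) <= INR (length u) * sumR m (fun i => Rabs (ln (t i))).
Proof.
  induction u as [|a u IH]; intros Hu; unfold ln_weight in *.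
  - unfold lsum; cbn. rewrite Rabs_R0. lra.
  - inversion Hu as [|? ? Ha Hu']; subst. rewrite lsum_cons. cbn [length]. rewrite S_INR.
    assert (Hta : Rabs (ln (t a)) <= sumR m (fun i => Rabs (ln (t i)))).
    { apply (lsum_term_le (fun i => Rabs (ln (t i)))); [intros i _; apply Rabs_pos|].
      apply in_seq; lia. }
    pose proof (Rabs_triang (ln (t a)) (lsum (fun b => ln (t b)) u)). specialize (IH Hu'). lra.
Qed.

Lemma abs_mean_ln_weight_le m A t nu k : cyl_measure m A nu ->
  Rabs (mean_ln_weight m t nu k) <= INR k * sumR m (fun i => Rabs (ln (t i))).
Proof.
  intros nu_cyl. set (L := sumR m (fun i => Rabs (ln (t i)))).
  eapply Rle_trans; [apply Rabs_lsum_le|].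
  rewrite <- (Rmult_1_r (INR k * L)), <- (cyl_measure_level m A nu nu_cyl k), <- lsum_scal.
  apply lsum_le. intros u Hu. destruct (in_words m k u Hu) as [Hlen Hletters].
  pose proof (abs_ln_weight_le m t u Hletters) as Hw. rewrite Hlen in Hw.
  pose proof (cyl_measure_nonneg m A nu nu_cyl u).
  rewrite Rabs_mult, (Rabs_pos_eq (nu u)), (Rmult_comm _ (nu u)) by assumption.
  apply Rmult_le_compat_l; assumption.
Qed.


Section MarkovMeasure.
Variables (m q : nat) (A : nat -> nat -> bool) (t : nat -> R).
Hypothesis m_pos : (0 < m)%nat.
Hypothesis t_pos : forall i, (i < m)%nat -> 0 < t i.
Hypothesis t_eigen : forall i, (i < m)%nat -> t i ^ q = sumR m (fun j => entry A i j * t j).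

Local Notation mu := (markov m q A t).

Lemma sumR_t_pos : 0 < sumR m t.
Proof.
  apply (Rlt_le_trans _ (t O)); [apply t_pos, m_pos|].
  apply lsum_term_le; [intros i Hi; apply Rlt_le, t_pos; apply in_seq in Hi; lia|].
  apply in_seq; lia.
Qed.

Lemma init_p_nonneg i : 0 <= init_p m t i.
Proof.
  unfold init_p. destruct (Nat.ltb_spec i m); [|lra].
  apply Rlt_le, Rdiv_lt_0_compat; [apply t_pos; assumption|apply sumR_t_pos].
Qed.

Lemma trans_p_nonneg i j : 0 <= trans_p m q A t i j.
Proof.
  unfold trans_p. destruct (Nat.ltb_spec i m), (Nat.ltb_spec j m), (A i j); cbn; try lra.
  apply Rlt_le, Rdiv_lt_0_compat; [|apply pow_lt]; apply t_pos; assumption.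
Qed.

Lemma trans_p_pos i j : (i < m)%nat -> (j < m)%nat -> A i j = true -> 0 < trans_p m q A t i j.
Proof.
  intros Hi Hj HA. unfold trans_p.
  rewrite (proj2 (Nat.ltb_lt i m) Hi), (proj2 (Nat.ltb_lt j m) Hj), HA. cbn.
  apply Rdiv_lt_0_compat; [|apply pow_lt]; apply t_pos; assumption.
Qed.

Lemma markov_from_nonneg i w : 0 <= markov_from m q A t i w.
Proof.
  revert i; induction w as [|j w IH]; intros i; cbn -[trans_p]; [lra|].
  apply Rmult_le_pos; [apply trans_p_nonneg|apply IH].
Qed.

Lemma markov_nonneg u : 0 <= mu u.
Proof.
  destruct u as [|i w]; cbn -[init_p]; [lra|].
  apply Rmult_le_pos; [apply init_p_nonneg|apply markov_from_nonneg].
Qed.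

Lemma sum_init_p : sumR m (init_p m t) = 1.
Proof.
  transitivity (lsum (fun i => / sumR m t * t i) (seq 0 m)).
  - apply lsum_ext_in. intros i Hi. apply in_seq in Hi. unfold init_p.
    destruct (Nat.ltb_spec i m); [unfold Rdiv; ring|lia].
  - rewrite lsum_scal. apply Rinv_l, Rgt_not_eq, sumR_t_pos.
Qed.

Lemma sum_trans_p i : (i < m)%nat -> sumR m (trans_p m q A t i) = 1.
Proof.
  intros Hi. transitivity (lsum (fun j => / t i ^ q * (entry A i j * t j)) (seq 0 m)).
  - apply lsum_ext_in. intros j Hj. apply in_seq in Hj. unfold trans_p, entry.
    destruct (Nat.ltb_spec i m), (Nat.ltb_spec j m); try lia. cbn.
    destruct (A i j); [unfold Rdiv; ring|ring].
  - rewrite lsum_scal. change (lsum ?F (seq 0 m)) with (sumR m F).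
    rewrite <- t_eigen by exact Hi. apply Rinv_l, Rgt_not_eq, pow_lt, t_pos, Hi.
Qed.

(* [t i ^ q > 0] forces a nonzero entry in row [i] of [A]. *)
Lemma A_row_nonzero i : (i < m)%nat -> exists j, (j < m)%nat /\ A i j = true.
Proof.
  intros Hi. apply NNPP. intros Hn.
  assert (Hrow : sumR m (fun j => entry A i j * t j) = 0).
  { transitivity (lsum (fun j => 0 * t j) (seq 0 m)); [|rewrite lsum_scal; ring].
    apply lsum_ext_in. intros j Hj. apply in_seq in Hj. unfold entry.
    destruct (A i j) eqn:E; [exfalso; apply Hn; exists j; split; [lia|exact E]|ring]. }
  rewrite <- t_eigen in Hrow by exact Hi.
  pose proof (pow_lt _ q (t_pos i Hi)). lra.
Qed.

Definition next_state (i : nat) : nat := hd O (filter (A i) (seq 0 m)).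

Lemma next_state_spec i : (i < m)%nat -> (next_state i < m)%nat /\ A i (next_state i) = true.
Proof.
  intros Hi. destruct (A_row_nonzero i Hi) as [j [Hj HA]].
  assert (Hin : In j (filter (A i) (seq 0 m))).
  { apply filter_In. split; [apply in_seq; lia|exact HA]. }
  unfold next_state. destruct (filter (A i) (seq 0 m)) as [|k l] eqn:E; [destruct Hin|].
  assert (Hk : In k (filter (A i) (seq 0 m))) by (rewrite E; left; reflexivity).
  apply filter_In in Hk as [Hk HAk]. apply in_seq in Hk. cbn. split; [lia|exact HAk].
Qed.

Lemma in_SigmaA_orbit i : (i < m)%nat -> in_SigmaA m A (fun k => Nat.iter k next_state i).
Proof.
  intros Hi k. assert (Hk : (Nat.iter k next_state i < m)%nat).
  { induction k as [|k IH]; [exact Hi|]. apply next_state_spec, IH. }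
  split; [exact Hk|]. apply next_state_spec, Hk.
Qed.

Lemma markov_from_pos_cyl i w : (i < m)%nat -> 0 < markov_from m q A t i w ->
  exists x, in_SigmaA m A x /\ has_prefix x (i :: w).
Proof.
  revert i; induction w as [|j w IH]; intros i Hi Hpos.
  - exists (fun k => Nat.iter k next_state i). split; [apply in_SigmaA_orbit, Hi|].
    intros [|k] Hk; [reflexivity|cbn in Hk; lia].
  - cbn -[trans_p] in Hpos.
    pose proof (trans_p_nonneg i j). pose proof (markov_from_nonneg j w).
    assert (Htr : 0 < trans_p m q A t i j) by nra.
    assert (Hrest : 0 < markov_from m q A t j w) by nra.
    destruct (trans_p_pos_inv _ _ _ _ _ _ Htr) as (_ & Hj & HA & _).
    destruct (IH j Hj Hrest) as [x [Hx Hpre]].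
    exists (fun k => match k with O => i | S k => x k end). split.
    + intros [|k]; [|apply Hx]. split; [exact Hi|]. rewrite (Hpre O) by (cbn; lia). exact HA.
    + intros [|k] Hk; [reflexivity|]. apply Hpre. cbn in *; lia.
Qed.

Lemma markov_pos_cyl u : 0 < mu u -> cyl_nonempty m A u.
Proof.
  destruct u as [|i w]; intros Hpos.
  - exists (fun k => Nat.iter k next_state O).
    split; [apply in_SigmaA_orbit, m_pos|intros k Hk; cbn in Hk; lia].
  - cbn -[init_p] in Hpos. pose proof (init_p_nonneg i). pose proof (markov_from_nonneg i w).
    assert (Hi : (i < m)%nat).
    { unfold init_p in Hpos. destruct (Nat.ltb_spec i m); [assumption|]. lra. }
    apply markov_from_pos_cyl; [exact Hi|nra].
Qed.

Lemma markov_from_pos_of_path x i w : in_SigmaA m A x -> has_prefix x (i :: w) ->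
  0 < markov_from m q A t i w.
Proof.
  revert x i; induction w as [|j w IH]; intros x i Hx Hpre; cbn -[trans_p]; [lra|].
  assert (Hi : x O = i) by (apply (Hpre O); cbn; lia).
  assert (Hj : x 1%nat = j) by (apply (Hpre 1%nat); cbn; lia).
  destruct (Hx O) as [Hi_m HA]. destruct (Hx 1%nat) as [Hj_m _]. subst i j.
  apply Rmult_lt_0_compat; [apply trans_p_pos; assumption|].
  apply (IH (fun k => x (S k))); [intros k; apply Hx|].
  intros k Hk. apply (Hpre (S k)). cbn in *; lia.
Qed.

Lemma cyl_markov_pos u : cyl_nonempty m A u -> 0 < mu u.
Proof.
  intros [x [Hx Hpre]]. destruct u as [|i w]; cbn -[init_p]; [lra|].
  assert (Hi : x O = i) by (apply (Hpre O); cbn; lia).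
  destruct (Hx O) as [Hi_m _]. subst i.
  apply Rmult_lt_0_compat; [|apply (markov_from_pos_of_path x); assumption].
  unfold init_p. rewrite (proj2 (Nat.ltb_lt _ m) Hi_m).
  apply Rdiv_lt_0_compat; [apply t_pos, Hi_m|apply sumR_t_pos].
Qed.

Lemma markov_pos_of_cyl_measure nu u : cyl_measure m A nu -> 0 < nu u -> 0 < mu u.
Proof. intros nu_cyl Hpos. apply cyl_markov_pos, (cyl_measure_pos_cyl m A nu nu_cyl), Hpos. Qed.

Lemma markov_split u : mu u = sumR m (fun a => mu (u ++ [a])).
Proof.
  destruct u as [|b v _] using rev_ind.
  - rewrite <- sum_init_p at 1. apply lsum_ext_in. intros a _. cbn -[init_p]. ring.
  - transitivity (lsum (fun a => mu (v ++ [b]) * trans_p m q A t b a) (seq 0 m)).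
    2:{ apply lsum_ext_in. intros a _. rewrite <- app_assoc. symmetry. apply markov_step. }
    rewrite lsum_scal. change (lsum ?F (seq 0 m)) with (sumR m F).
    destruct (markov_nonneg (v ++ [b])) as [Hpos|<-]; [|ring].
    apply markov_pos_cyl, cyl_nonempty_letters, Forall_app in Hpos as [_ Hb].
    inversion Hb; subst. rewrite sum_trans_p by assumption. ring.
Qed.

Lemma markov_cyl_measure : cyl_measure m A mu.
Proof.
  split; [reflexivity|]. split; [exact markov_nonneg|]. split; [exact markov_split|].
  intros u Hu. destruct (markov_nonneg u) as [Hpos|<-]; [|reflexivity].
  exfalso. apply Hu, markov_pos_cyl, Hpos.
Qed.

Lemma ln_markov_snoc u a : 0 < mu (u ++ [a]) ->
  ln (mu (u ++ [a])) = - ln (sumR m t) + (1 - INR q) * ln_weight t u + ln (t a).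
Proof.
  revert a; induction u as [|b u IH] using rev_ind; intros a Hpos.
  - cbn -[init_p] in *. rewrite Rmult_1_r in *. unfold init_p in *.
    destruct (Nat.ltb_spec a m); [|lra].
    rewrite ln_div by (apply t_pos || apply sumR_t_pos; assumption).
    unfold ln_weight, lsum; cbn; ring.
  - rewrite <- app_assoc in *. cbn [app] in *. rewrite markov_step in *.
    pose proof (markov_nonneg (u ++ [b])). pose proof (trans_p_nonneg b a).
    assert (Htr : 0 < trans_p m q A t b a) by nra.
    destruct (trans_p_pos_inv _ _ _ _ _ _ Htr) as (Hb & Ha & _ & ->).
    pose proof (t_pos a Ha). pose proof (pow_lt _ q (t_pos b Hb)).
    rewrite ln_mult, IH, ln_div, ln_pow, ln_weight_snoc
      by (nra || apply Rdiv_lt_0_compat || apply t_pos; assumption).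
    ring.
Qed.

Lemma cross_entropy_markov_S nu k : cyl_measure m A nu ->
  cross_entropy m nu mu (S k) =
  ln (sumR m t) + INR q * mean_ln_weight m t nu k - mean_ln_weight m t nu (S k).
Proof.
  intros nu_cyl. pose proof nu_cyl as (_ & _ & nu_split & _).
  unfold cross_entropy, mean_ln_weight. rewrite !lsum_words_S, <- lsum_opp.
  replace (ln (sumR m t)) with (ln (sumR m t) * lsum nu (words m k))
    by (rewrite (cyl_measure_level m A nu nu_cyl); ring).
  rewrite <- !lsum_scal, <- lsum_plus, <- lsum_minus. apply lsum_ext_in. intros u _.
  rewrite (nu_split u). change (sumR m (fun a => @?F a)) with (lsum F (seq 0 m)).
  rewrite (Rmult_comm _ (ln_weight t u)), <- Rmult_assoc.
  rewrite <- lsum_opp, <- !lsum_scal, <- lsum_plus, <- lsum_minus.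
  apply lsum_ext_in. intros a _. rewrite ln_weight_snoc.
  destruct (cyl_measure_nonneg m A nu nu_cyl (u ++ [a])) as [Hpos|<-]; [|ring].
  rewrite ln_markov_snoc; [ring|].
  apply (markov_pos_of_cyl_measure nu); assumption.
Qed.

End MarkovMeasure.

Lemma is_series_nonneg_eq0 (a : nat -> R) :
  (forall n, 0 <= a n) -> is_series a 0 -> forall n, a n = 0.
Proof.
  intros Ha Hs n.
  assert (Hsum : sum_n a n <= 0).
  { apply (is_lim_seq_incr_compare (sum_n a)); [exact Hs|].
    intros k. rewrite sum_Sn. unfold plus; cbn. pose proof (Ha (S k)). lra. }
  assert (a n <= sum_n a n).
  { rewrite sum_n_Reals. destruct n as [|n]; cbn; [lra|].
    assert (0 <= sum_f_R0 a n) by (apply cond_pos_sum; exact Ha). lra. }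
  pose proof (Ha n). lra.
Qed.

Lemma is_series_dominated (a b : nat -> R) (l : R) :
  (forall n, 0 <= a n <= b n) -> is_series b l ->
  exists la, is_series a la /\ la <= l /\ (la = l -> forall n, a n = b n).
Proof.
  intros Hab Hb.
  assert (Ha : ex_series a).
  { apply (@ex_series_le R_AbsRing R_CompleteNormedModule a b); [|exists l; exact Hb].
    intros n. change (Rabs (a n) <= b n). rewrite Rabs_pos_eq; apply Hab. }
  exists (Series a). split; [apply Series_correct, Ha|]. split.
  - rewrite <- (is_series_unique b l Hb). apply Series_le; [exact Hab|exists l; exact Hb].
  - intros Heq n. enough (b n - a n = 0) by lra.
    apply (is_series_nonneg_eq0 (fun n => b n - a n)); [intros k; pose proof (Hab k); lra|].
    assert (Hex : ex_series (fun k => b k - a k)).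
    { apply (ex_series_minus b a); [exists l; exact Hb|exact Ha]. }
    replace 0 with (Series (fun k => b k - a k)); [apply Series_correct, Hex|].
    rewrite Series_minus, (is_series_unique b l Hb), Heq; [ring|exists l; exact Hb|exact Ha].
Qed.

Lemma nat_mul_succ_le_pow2 n : (n * S n <= 2 * 2 ^ n)%nat.
Proof.
  induction n as [|n IH]; [cbn; lia|].
  destruct n as [|[|n]]; [cbn; lia|cbn; lia|]. rewrite Nat.pow_succ_r'. nia.
Qed.

(* [n / r ^ n <= n / 2 ^ n <= 2 / (n + 1)]. *)
Lemma lim_INR_div_pow (r : R) : 2 <= r -> is_lim_seq (fun n => INR n / r ^ n) 0.
Proof.
  intros Hr.
  apply (is_lim_seq_le_le (fun _ => 0) _ (fun n => 2 * / INR (S n))).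
  - intros n. assert (0 < 2 ^ n) by (apply pow_lt; lra).
    assert (2 ^ n <= r ^ n) by (apply pow_incr; lra).
    assert (0 < INR (S n)) by (apply lt_0_INR; lia). pose proof (pos_INR n).
    assert (Hn : INR n * INR (S n) <= 2 * 2 ^ n).
    { rewrite <- mult_INR. replace (2 * 2 ^ n) with (INR (2 * 2 ^ n)).
      - apply le_INR, nat_mul_succ_le_pow2.
      - rewrite mult_INR, pow_INR. replace (INR 2) with 2 by (cbn; ring). ring. }
    split; [apply Rmult_le_pos; [lra|apply Rlt_le, Rinv_0_lt_compat; lra]|].
    unfold Rdiv. apply (Rmult_le_reg_r (r ^ n * INR (S n))); [apply Rmult_lt_0_compat; lra|].
    replace (INR n * / r ^ n * (r ^ n * INR (S n))) with (INR n * INR (S n)) by (field; lra).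
    replace (2 * / INR (S n) * (r ^ n * INR (S n))) with (2 * r ^ n) by (field; lra). lra.
  - apply is_lim_seq_const.
  - replace (Finite 0) with (Rbar_mult 2 0) by (cbn; f_equal; ring).
    apply is_lim_seq_scal_l. pose proof is_lim_seq_INR as HINR.
    apply (is_lim_seq_incr_1 INR), is_lim_seq_inv in HINR; [exact HINR|discriminate].
Qed.

Definition s_weight (m q n : nat) : R := (INR q - 1) ^ 2 / (ln (INR m) * INR q ^ S (S n)).

Definition s_value (m q : nat) (t : nat -> R) : R :=
  (INR q - 1) * ln (sumR m t) / (INR q * ln (INR m)).

Section SValue.
Variables (m q : nat) (A : nat -> nat -> bool) (t : nat -> R).
Hypotheses (m_ge2 : (2 <= m)%nat) (q_ge2 : (2 <= q)%nat).
Hypothesis t_pos : forall i, (i < m)%nat -> 0 < t i.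
Hypothesis t_eigen : forall i, (i < m)%nat -> t i ^ q = sumR m (fun j => entry A i j * t j).

Local Notation mu := (markov m q A t).

Let m_pos : (0 < m)%nat.
Proof. lia. Qed.

Let ln_m_pos : 0 < ln (INR m).
Proof. rewrite <- ln_1. apply ln_increasing; [lra|]. apply (lt_INR 1); lia. Qed.

Let q_ge2_R : 2 <= INR q.
Proof. apply (le_INR 2); exact q_ge2. Qed.

Lemma s_weight_pos n : 0 < s_weight m q n.
Proof.
  unfold s_weight. apply Rdiv_lt_0_compat; [apply pow_lt; lra|].
  apply Rmult_lt_0_compat; [exact ln_m_pos|apply pow_lt; lra].
Qed.

Lemma s_is_iff nu l : cyl_measure m A nu ->
  s_is m q A nu l <-> is_series (fun n => s_weight m q n * cross_entropy m nu nu (S n)) l.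
Proof.
  intros nu_cyl. unfold s_is. rewrite <- is_series_Reals.
  assert (Hterm : forall n, (INR q - 1) ^ 2 * Hk m A nu (S n) / INR q ^ S (S n) =
                            s_weight m q n * cross_entropy m nu nu (S n)).
  { intros n. rewrite (Hk_cross_entropy m A nu (S n) nu_cyl). unfold s_weight.
    field. split; [apply pow_nonzero|]; lra. }
  split; intros Hs; (eapply is_series_ext; [|exact Hs]); intros n; [|symmetry]; apply Hterm.
Qed.

Section AnyMeasure.
Variable nu : list nat -> R.
Hypothesis nu_cyl : cyl_measure m A nu.

Lemma s_cross_entropy_bounds n :
  0 <= s_weight m q n * cross_entropy m nu nu (S n) <=
  s_weight m q n * cross_entropy m nu mu (S n).
Proof.
  pose proof (s_weight_pos n). split.
  - apply Rmult_le_pos; [lra|apply (cross_entropy_self_nonneg m A), nu_cyl].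
  - apply Rmult_le_compat_l; [lra|]. apply (gibbs_cross_entropy m A); [exact nu_cyl| |].
    + apply markov_cyl_measure; assumption.
    + intros u. apply (markov_pos_of_cyl_measure m q A t m_pos t_pos), nu_cyl.
Qed.

Lemma sum_s_cross_entropy_markov N :
  sum_f_R0 (fun n => s_weight m q n * cross_entropy m nu mu (S n)) N =
  s_value m q t * (1 - / INR q ^ S N)
  - (INR q - 1) ^ 2 / ln (INR m) * (mean_ln_weight m t nu (S N) / INR q ^ S (S N)).
Proof.
  induction N as [|N IH]; cbn [sum_f_R0]; [|rewrite IH];
    rewrite (cross_entropy_markov_S m q A t m_pos t_pos nu) by exact nu_cyl;
    [rewrite mean_ln_weight_0|]; unfold s_weight, s_value; cbn [pow];
    field; repeat split; try lra; apply pow_nonzero; lra.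
Qed.

Lemma lim_mean_ln_weight_div_pow :
  is_lim_seq (fun N => mean_ln_weight m t nu (S N) / INR q ^ S (S N)) 0.
Proof.
  set (L := sumR m (fun i => Rabs (ln (t i)))).
  apply is_lim_seq_abs_0.
  apply (is_lim_seq_le_le (fun _ => 0) _ (fun N => L * (INR (S (S N)) / INR q ^ S (S N)))).
  - intros N. split; [apply Rabs_pos|].
    assert (0 < INR q ^ S (S N)) by (apply pow_lt; lra).
    pose proof (abs_mean_ln_weight_le m A t nu (S N) nu_cyl) as HZ. fold L in HZ.
    assert (0 <= L) by (apply lsum_nonneg; intros i _; apply Rabs_pos).
    assert (INR (S N) <= INR (S (S N))) by (apply le_INR; lia).
    unfold Rdiv. rewrite Rabs_mult, Rabs_inv, (Rabs_pos_eq (INR q ^ _)) by lra.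
    rewrite <- Rmult_assoc. apply Rmult_le_compat_r; [apply Rlt_le, Rinv_0_lt_compat; lra|]. nra.
  - apply is_lim_seq_const.
  - replace (Finite 0) with (Rbar_mult L 0) by (cbn; f_equal; ring).
    apply is_lim_seq_scal_l, (is_lim_seq_ext (fun n => INR (n + 2) / INR q ^ (n + 2))).
    { intros n. rewrite Nat.add_comm. reflexivity. }
    apply (is_lim_seq_incr_n (fun n => INR n / INR q ^ n) 2), lim_INR_div_pow; lra.
Qed.

Lemma is_series_s_cross_entropy_markov :
  is_series (fun n => s_weight m q n * cross_entropy m nu mu (S n)) (s_value m q t).
Proof.
  enough (Hlim : is_lim_seq (sum_n (fun n => s_weight m q n * cross_entropy m nu mu (S n)))
                            (s_value m q t)) by exact Hlim.
  apply (is_lim_seq_ext (fun N => s_value m q t * (1 - / INR q ^ S N)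
    - (INR q - 1) ^ 2 / ln (INR m) * (mean_ln_weight m t nu (S N) / INR q ^ S (S N)))).
  { intros N. rewrite sum_n_Reals. symmetry. apply sum_s_cross_entropy_markov. }
  replace (Finite (s_value m q t)) with
    (Finite (s_value m q t * (1 - 0) - (INR q - 1) ^ 2 / ln (INR m) * 0)) by (f_equal; ring).
  apply is_lim_seq_minus'; apply is_lim_seq_mult'; try apply is_lim_seq_const.
  - apply is_lim_seq_minus'; [apply is_lim_seq_const|].
    apply (is_lim_seq_incr_1 (fun n => / INR q ^ n)).
    apply (is_lim_seq_ext (fun n => (/ INR q) ^ n)); [intros n; apply pow_inv|].
    apply is_lim_seq_geom.
    rewrite Rabs_pos_eq; [rewrite <- Rinv_1; apply Rinv_lt_contravar; lra|].
    apply Rlt_le, Rinv_0_lt_compat; lra.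
  - exact lim_mean_ln_weight_div_pow.
Qed.

Lemma s_is_le_s_value : exists snu, s_is m q A nu snu /\ snu <= s_value m q t /\
  (snu = s_value m q t -> forall u, nu u = mu u).
Proof.
  destruct (is_series_dominated _ _ _ s_cross_entropy_bounds is_series_s_cross_entropy_markov)
    as (snu & Hsnu & Hle & Heq).
  exists snu. split; [apply s_is_iff; assumption|]. split; [exact Hle|].
  assert (mu_cyl : cyl_measure m A mu) by (apply markov_cyl_measure; assumption).
  intros E. apply (cyl_measure_ext m A); [exact nu_cyl|exact mu_cyl|].
  intros k. apply (gibbs_cross_entropy_eq m A); [exact nu_cyl|exact mu_cyl| |].
  - intros u. apply (markov_pos_of_cyl_measure m q A t m_pos t_pos), nu_cyl.
  - apply (Rmult_eq_reg_l (s_weight m q k)); [exact (Heq E k)|apply Rgt_not_eq, s_weight_pos].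
Qed.

End AnyMeasure.

Lemma s_is_markov : s_is m q A mu (s_value m q t).
Proof.
  assert (mu_cyl : cyl_measure m A mu) by (apply markov_cyl_measure; assumption).
  apply s_is_iff; [exact mu_cyl|]. apply is_series_s_cross_entropy_markov, mu_cyl.
Qed.

End SValue.

(* Primitivity of [A] only serves to guarantee that [t] exists; here [t] is given. *)
Theorem corollary2p6 (m q : nat) (A : nat -> nat -> bool) (t : nat -> R) :
  (2 <= m)%nat -> (2 <= q)%nat -> primitive01 m A ->
  (forall i, (i < m)%nat -> 1 < t i) ->
  (forall i, (i < m)%nat -> t i ^ q = sumR m (fun j => entry A i j * t j)) ->
  cyl_measure m A (markov m q A t) /\
  exists smu : R,
    s_is m q A (markov m q A t) smu /\
    forall nu : list nat -> R, cyl_measure m A nu ->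
      exists snu : R, s_is m q A nu snu /\ snu <= smu /\
        (snu = smu -> forall u, nu u = markov m q A t u).
Proof.
  intros m_ge2 q_ge2 _ t_gt1 t_eigen.
  assert (t_pos : forall i, (i < m)%nat -> 0 < t i) by (intros i Hi; specialize (t_gt1 i Hi); lra).
  split; [apply markov_cyl_measure; [lia|assumption..]|].
  exists (s_value m q t). split; [apply s_is_markov; assumption|].
  intros nu nu_cyl. apply s_is_le_s_value; assumption.
Qed.
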